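(* Let $\mathcal H=(M,n,\mathcal R)$ be a BMS, $S\subseteq\mathbb R^n$ a bounded convex polytope, and $x_0$ a point in the interior of $S$. The scheduler has a static winning strategy from $x_0$ if and only if there is a set $M'\subseteq M$ such that $\mathcal R(m)$ is a singleton $\{R(m)\}$ for every $m\in M'$ and the CMS $(M',n,R)$ is safe.
   Context: A multi-mode system is a tuple $\mathcal H=(M,n,\mathcal R)$ with $M$ a finite nonempty set of modes, $n\ge1$ variables, and $\mathcal R:M\to 2^{\mathbb R^n}$ giving nonempty rate sets; it is a BMS if each $\mathcal R(m)$ is a bounded convex polytope, a CMS if each is a singleton. A CMS $(M',n,R)$ is safe if there are $t_m\ge0$ ($m\in M'$) with $\sum_{m\in M'}t_m=1$ and $\sum_{m\in M'}t_mR(m)=\vec0$ (in particular $M'\neq\emptyset$). The schedulability game from $x_0$: in round $i\ge1$ the scheduler chooses $(m_i,t_i)\in M\times\mathbb R_{>0}$, the environment chooses $r_i\in\mathcal R(m_i)$, and $x_i=x_{i-1}+t_ir_i$. Scheduler strategies map finite histories $\langle x_0,(m_1,t_1),r_1,x_1,\dots,x_k\rangle$ to timed moves; environment strategies map a history and current timed move $(m,t)$ to a rate in $\mathcal R(m)$. A scheduler strategy $\sigma$ is static if $\sigma(\rho)=\sigma(\rho')$ for any two histories $\rho,\rho'$ of the same length with the same starting state and the same sequence of timed moves (i.e. it ignores the environment's choices), so it amounts to a fixed sequence $(m_1,t_1),(m_2,t_2),\dots$. A scheduler strategy is winning from $x_0$ if against every environment strategy the run satisfies $x_i\in S$ and $x_i+tr_{i+1}\in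 S$ for all $i\ge0$, $t\in[0,t_{i+1}]$, and $\sum_it_i=\infty$. *)

From Stdlib Require Import Reals.
From mathcomp Require Import all_boot.

Set Implicit Arguments.
Unset Strict Implicit.
Unset Printing Implicit Defensive.

Local Open Scope R_scope.

Definition vec (n : nat) := 'I_n -> R.

Definition vzero (n : nat) : vec n := fun _ => 0.
Definition vadd (n : nat) (x y : vec n) : vec n := fun j => x j + y j.
Definition vscale (n : nat) (a : R) (x : vec n) : vec n := fun j => a * x j.

Definition in_conv_hull (n : nat) (l : seq (vec n)) (x : vec n) : Prop :=
  exists w : nat -> R,
    (forall i : nat, (i < size l)%N -> 0 <= w i) /\
    \big[Rplus/0]_(i < size l) w i = 1 /\
    forall j : 'I_n,
      x j = \big[Rplus/0]_(i < size l) (w i * nth (@vzero n) l i j).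

Definition is_polytope (n : nat) (P : vec n -> Prop) : Prop :=
  exists l : seq (vec n), l <> [::] /\ forall x, P x <-> in_conv_hull l x.

(* Topological interior (w.r.t. the product / sup-norm topology, which is the
   usual topology on R^n). *)
Definition in_interior (n : nat) (S : vec n -> Prop) (x : vec n) : Prop :=
  exists eps, 0 < eps /\
    forall y : vec n, (forall j, Rabs (y j - x j) < eps) -> S y.

(* A multi-mode system (M, n, Rset) is a BMS if every rate set is a bounded
   convex polytope (polytopes here are nonempty by definition). *)
Definition is_BMS (M : finType) (n : nat) (Rset : M -> vec n -> Prop) : Prop :=
  forall m, is_polytope (Rset m).

Definition is_singleton (n : nat) (P : vec n -> Prop) (r : vec n) : Prop :=
  forall x, P x <-> x = r.

(* The CMS (M', n, Rv) is safe: a convex combination of the rates of the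
   modes of M' is zero (which forces M' nonempty). *)
Definition cms_safe (M : finType) (n : nat) (M' : {pred M}) (Rv : M -> vec n)
  : Prop :=
  exists t : M -> R,
    (forall m, m \in M' -> 0 <= t m) /\
    \big[Rplus/0]_(m | m \in M') t m = 1 /\
    forall j : 'I_n, \big[Rplus/0]_(m | m \in M') (t m * Rv m j) = 0.

(* State after k rounds, for a static schedule of durations tau and
   environment rate choices r: x_0 = x0, x_{k+1} = x_k + tau_k r_k
   (round i+1 of the paper is index i here). *)
Fixpoint run_state (n : nat) (x0 : vec n) (tau : nat -> R) (r : nat -> vec n)
  (k : nat) : vec n :=
  match k with
  | O => x0
  | S k' => vadd (run_state x0 tau r k') (vscale (tau k') (r k'))
  end.

(* A static scheduler strategy is a fixed sequence of timed moves
   (mode i, tau i) with tau i > 0.  Since it ignores the environment, the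
   runs produced against all environment strategies are exactly the runs
   for all rate sequences r with r i in Rset (mode i). *)
Definition static_winning (M : finType) (n : nat) (Rset : M -> vec n -> Prop)
  (S : vec n -> Prop) (x0 : vec n) (mode : nat -> M) (tau : nat -> R) : Prop :=
  (forall i, 0 < tau i) /\
  (forall r : nat -> vec n, (forall i, Rset (mode i) (r i)) ->
     forall i (s : R), 0 <= s <= tau i ->
       S (vadd (run_state x0 tau r i) (vscale s (r i)))) /\
  (forall B : R, exists N : nat, B < \big[Rplus/0]_(i < N) tau i).

Definition has_static_winning (M : finType) (n : nat)
  (Rset : M -> vec n -> Prop) (S : vec n -> Prop) (x0 : vec n) : Prop :=
  exists (mode : nat -> M) (tau : nat -> R),
    static_winning Rset S x0 mode tau.

(* (<=) A safe CMS gives weights t >= 0 on M' with sum_m t m R(m) = 0.  We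
   cycle through the modes of positive weight, staying t m * c time units in
   mode m.  Every complete cycle has zero drift, so the state never leaves a
   ball of radius (cycle length + 1) * c * max|t m R(m)| around x0; choosing
   c small keeps it inside S, and time grows by a fixed amount per cycle.

   (=>) Given a static winning schedule, fix a rate p m in every rate set.
   Boundedness of S bounds all displacements, so any mode whose rate set
   contains a rate other than p m is used only for a bounded total time.
   The relative frequencies of the modes lie in [0,1]^M; a limit point l of
   them (Bolzano-Weierstrass) has mass one, vanishes outside singleton modes
   and balances the rates p, so the support of l is a safe CMS. *)

From Stdlib Require Import Reals Lra Lia.
From Stdlib Require Import Classical ClassicalEpsilon FunctionalExtensionality.
From HB Require Import structures.
From mathcomp Require Import all_boot.
Local Open Scope R_scope.
Set Implicit Arguments.
Unset Strict Implicit.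

(* Real addition as a commutative monoid law, so that the generic bigop
   lemmas (splitting, reindexing, removal) apply to \big[Rplus/0]. *)
HB.instance Definition _ := Monoid.isComLaw.Build R 0 Rplus
  (fun x y z => esym (Rplus_assoc x y z)) Rplus_comm Rplus_0_l.

Lemma sumR_mulr (I : Type) (r : seq I) (P : pred I) (F : I -> R) c :
  \big[Rplus/0]_(i <- r | P i) (F i * c) = (\big[Rplus/0]_(i <- r | P i) F i) * c.
Proof. by elim/big_rec2: _ => [|i y1 y2 _ ->]; ring. Qed.

Lemma sumR_ge0 (I : Type) (r : seq I) (P : pred I) (F : I -> R) :
  (forall i, P i -> 0 <= F i) -> 0 <= \big[Rplus/0]_(i <- r | P i) F i.
Proof. by move=> F_ge0; elim/big_rec: _ => [|i y /F_ge0]; lra. Qed.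

Lemma sumR_le (I : Type) (r : seq I) (P : pred I) (F G : I -> R) :
  (forall i, P i -> F i <= G i) ->
  \big[Rplus/0]_(i <- r | P i) F i <= \big[Rplus/0]_(i <- r | P i) G i.
Proof. by move=> FG; elim/big_rec2: _ => [|i y1 y2 /FG]; lra. Qed.

Lemma sumR_abs_le (I : Type) (r : seq I) (P : pred I) (F : I -> R) :
  Rabs (\big[Rplus/0]_(i <- r | P i) F i) <= \big[Rplus/0]_(i <- r | P i) Rabs (F i).
Proof.
elim/big_rec2: _ => [|i y1 y2 _ IH]; first by rewrite Rabs_R0; lra.
by have := Rabs_triang (F i) y2; lra.
Qed.

Lemma sumR_term_le (I : eqType) (r : seq I) (F : I -> R) i0 :
  (forall i, i \in r -> 0 <= F i) -> i0 \in r -> F i0 <= \big[Rplus/0]_(i <- r) F i.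
Proof.
move=> F_ge0 r_i0; rewrite (big_rem i0) //=.
have : 0 <= \big[Rplus/0]_(i <- rem i0 r) F i.
  by rewrite big_seq; apply: sumR_ge0 => i /mem_rem /F_ge0.
lra.
Qed.

Lemma sumR_periodic (f : nat -> R) k : (forall i, f (k + i)%N = f i) ->
  forall q s, \big[Rplus/0]_(i < q * k + s) f i =
    INR q * \big[Rplus/0]_(i < k) f i + \big[Rplus/0]_(i < s) f i.
Proof.
move=> f_per; elim=> [|q IH] s; first by rewrite mul0n add0n /=; ring.
have -> : (q.+1 * k + s = q * k + (k + s))%N by rewrite mulSn -addnA addnCA.
rewrite IH S_INR -!(big_mkord xpredT) (@big_cat_nat _ _ _ k 0 (k + s)) //=;
  last exact: leq_addr.
have shift := @big_addn R 0 Rplus 0 (k + s) k xpredT f.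
rewrite add0n addKn in shift; rewrite shift.
rewrite [X in _ + (_ + X)](eq_bigr f); last by move=> i _; rewrite addnC f_per.
ring.
Qed.

Lemma sumR_uniform_bound (f : nat -> R) b s : (forall i, Rabs (f i) <= b) ->
  Rabs (\big[Rplus/0]_(i < s) f i) <= INR s * b.
Proof.
move=> f_le; elim: s => [|s IH]; first by rewrite big_ord0 Rabs_R0 /=; lra.
rewrite S_INR Rmult_plus_distr_r Rmult_1_l big_ord_recr /=.
set u := \big[Rplus/0]_(i < s) f i in IH *.
by apply: Rle_trans (Rabs_triang _ _) _; have := f_le s; lra.
Qed.

Lemma run_state_sum n (x0 : vec n) tau r N j :
  run_state x0 tau r N j = x0 j + \big[Rplus/0]_(i < N) (tau i * r i j).
Proof.
elim: N => [|N IH] /=; first by rewrite big_ord0; ring.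
by rewrite /vadd /vscale IH big_ord_recr /=; ring.
Qed.

Lemma polytope_nonempty n (P : vec n -> Prop) : is_polytope P -> exists x, P x.
Proof.
case=> [[|a l] [nonnil P_hull]] //; exists a; apply/P_hull.
exists (fun i => if i == 0%N then 1 else 0); split; last split.
- by move=> [|i] _ /=; lra.
- by rewrite big_ord_recl /= big1 //; ring.
- by move=> j; rewrite big_ord_recl /= big1 => [|i _]; ring.
Qed.

Lemma polytope_bounded n (P : vec n -> Prop) : is_polytope P ->
  forall j, exists B, forall x, P x -> Rabs (x j) <= B.
Proof.
case=> l [_ P_hull] j.
exists (\big[Rplus/0]_(i < size l) Rabs (nth (@vzero n) l i j)).
move=> x /P_hull [w [w_ge0 [w_sum1 ->]]].
apply: Rle_trans (sumR_abs_le _ _ _) _; apply: sumR_le => i _.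
have w_le1 : w i <= 1.
  rewrite -w_sum1; apply: (@sumR_term_le _ _ (fun i : 'I_(size l) => w i) i).
    by move=> i' _; apply: w_ge0.
  exact: mem_index_enum.
rewrite Rabs_mult Rabs_pos_eq; last exact: w_ge0.
by have := w_ge0 i (ltn_ord i); have := Rabs_pos (nth (@vzero n) l i j); nra.
Qed.

Definition strictly_increasing (phi : nat -> nat) := forall k, (phi k < phi k.+1)%N.

Lemma strictly_increasing_ge phi : strictly_increasing phi -> forall k, (k <= phi k)%N.
Proof. by move=> phi_incr; elim=> [|k IH] //; apply: leq_ltn_trans IH (phi_incr k). Qed.

Lemma strictly_increasing_mono phi a b : strictly_increasing phi ->
  (a <= b)%N -> (phi a <= phi b)%N.
Proof.
move=> phi_incr /subnK <-; elim: (b - a)%N => [|d IH] //.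
by rewrite addSn; apply: leq_trans IH (ltnW (phi_incr _)).
Qed.

Lemma strictly_increasing_comp phi psi :
  strictly_increasing phi -> strictly_increasing psi ->
  strictly_increasing (fun k => phi (psi k)).
Proof.
move=> phi_incr psi_incr k.
exact: leq_trans (phi_incr (psi k)) (strictly_increasing_mono phi_incr (psi_incr k)).
Qed.

Lemma Un_cv_subseq u l phi :
  Un_cv u l -> strictly_increasing phi -> Un_cv (fun k => u (phi k)) l.
Proof.
move=> u_cv phi_incr eps eps_pos; have [N HN] := u_cv eps eps_pos.
exists N => k Hk; apply: HN; apply/leP.
by apply: leq_trans (strictly_increasing_ge phi_incr k); apply/leP.
Qed.

Lemma Un_cv_const c : Un_cv (fun _ => c) c.
Proof.
by move=> eps eps_pos; exists 0%nat => k _; rewrite /R_dist Rminus_diag Rabs_R0.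
Qed.

Lemma Un_cv_ext u v l : (forall k, u k = v k) -> Un_cv u l -> Un_cv v l.
Proof.
move=> uv u_cv eps eps_pos; have [N HN] := u_cv eps eps_pos.
by exists N => k Hk; rewrite -uv; apply: HN.
Qed.

Lemma Un_cv_ge0 u l : Un_cv u l -> (forall k, 0 <= u k) -> 0 <= l.
Proof.
move=> u_cv u_ge0; apply: Rnot_lt_le => l_neg.
have [N /(_ N (le_n _))] := u_cv (- l / 2) ltac:(lra); rewrite /R_dist.
by have := u_ge0 N; have := Rle_abs (u N - l); lra.
Qed.

Lemma Un_cv_sum (I : Type) (s : seq I) (P : pred I) (f : nat -> I -> R) (l : I -> R) :
  (forall i, Un_cv (fun k => f k i) (l i)) ->
  Un_cv (fun k => \big[Rplus/0]_(i <- s | P i) f k i) (\big[Rplus/0]_(i <- s | P i) l i).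
Proof.
move=> f_cv; elim: s => [|a s IH].
  by rewrite big_nil; apply: (Un_cv_ext _ (Un_cv_const 0)) => k; rewrite big_nil.
rewrite big_cons; apply: (Un_cv_ext (u := fun k =>
  if P a then f k a + \big[Rplus/0]_(i <- s | P i) f k i
  else \big[Rplus/0]_(i <- s | P i) f k i)); first by move=> k; rewrite big_cons.
by case: (P a) => //; apply: CV_plus.
Qed.

Lemma unit_interval_subseq (u : nat -> R) : (forall k, 0 <= u k <= 1) ->
  exists phi l, strictly_increasing phi /\ Un_cv (fun k => u (phi k)) l.
Proof.
move=> u01.
have [l l_adh] := @Bolzano_Weierstrass u _ (compact_P3 0 1) u01.
have close : forall N k : nat,
    {p : nat | (N <= p)%N /\ Rabs (u p - l) < / (INR k + 1)}.
  move=> N k; apply: constructive_indefinite_description.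
  have r_pos : 0 < / (INR k + 1) by apply: Rinv_0_lt_compat; have := pos_INR k; lra.
  have [|p [/leP Np p_close]] := l_adh (disc l (mkposreal _ r_pos)) N.
    by exists (mkposreal _ r_pos).
  by exists p.
pose fix phi k := match k with
  | O => proj1_sig (close 0%N 0%N)
  | S k' => proj1_sig (close (phi k').+1 k) end.
have phi_close : forall k, Rabs (u (phi k) - l) < / (INR k + 1).
  by case=> [|k]; [apply: (proj2 (proj2_sig (close 0%N 0%N)))
                  | apply: (proj2 (proj2_sig (close (phi k).+1 k.+1)))].
exists phi, l; split; first by move=> k; apply: (proj1 (proj2_sig (close _ _))).
move=> eps eps_pos; have [N [N_big N_pos]] := archimed_cor1 eps eps_pos.
exists N => k /le_INR Nk; rewrite /R_dist.
apply: Rlt_le_trans (phi_close k) _; apply: Rle_trans (Rlt_le _ _ N_big).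
by apply: Rinv_le_contravar; [apply: lt_0_INR; lia | lra].
Qed.

Lemma unit_cube_subseq_list (I : eqType) (s : seq I) (u : nat -> I -> R) :
  (forall k i, 0 <= u k i <= 1) ->
  exists phi l, strictly_increasing phi /\
    forall i, i \in s -> Un_cv (fun k => u (phi k) i) (l i).
Proof.
move=> u01; elim: s => [|a s [phi [l [phi_incr u_cv]]]].
  by exists id, (fun _ => 0); split => // k.
have [psi [la [psi_incr ua_cv]]] :=
  unit_interval_subseq (fun k => u01 (phi k) a).
exists (fun k => phi (psi k)), (fun i => if i == a then la else l i); split.
  exact: strictly_increasing_comp.
move=> i; rewrite inE; case: eqP => [-> _ //|_ /= s_i].
by apply: (Un_cv_subseq (u := fun k => u (phi k) i)) => //; apply: u_cv.
Qed.

Lemma unit_cube_subseq (I : finType) (u : nat -> I -> R) :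
  (forall k i, 0 <= u k i <= 1) ->
  exists phi l, strictly_increasing phi /\ forall i, Un_cv (fun k => u (phi k) i) (l i).
Proof.
move=> u01; have [phi [l [phi_incr u_cv]]] := unit_cube_subseq_list (enum I) u01.
by exists phi, l; split => // i; apply: u_cv; rewrite mem_enum.
Qed.

Section StaticSchedule.

Variables (M : finType) (n : nat) (Rset : M -> vec n -> Prop)
  (S : vec n -> Prop) (x0 : vec n) (mode : nat -> M) (tau : nat -> R).

Hypothesis tau_pos : forall i, 0 < tau i.
Hypothesis runs_in_S : forall r : nat -> vec n, (forall i, Rset (mode i) (r i)) ->
  forall i (s : R), 0 <= s <= tau i -> S (vadd (run_state x0 tau r i) (vscale s (r i))).
Hypothesis time_diverges : forall B : R, exists N : nat, B < \big[Rplus/0]_(i < N) tau i.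
Hypothesis S_bounded : forall j, exists B, forall x, S x -> Rabs (x j) <= B.

Lemma displacement_bounded j : exists D, forall r : nat -> vec n,
  (forall i, Rset (mode i) (r i)) ->
  forall N, Rabs (\big[Rplus/0]_(i < N) (tau i * r i j)) <= D.
Proof.
have [B S_le] := S_bounded j; exists (B + Rabs (x0 j)) => r r_adm N.
have := S_le _ (runs_in_S r_adm (conj (Rle_refl 0) (Rlt_le _ _ (tau_pos N)))).
rewrite /vadd /vscale run_state_sum Rmult_0_l Rplus_0_r.
set d := \big[Rplus/0]_(i < N) _ => x_le.
have -> : d = (x0 j + d) + - x0 j by ring.
by apply: Rle_trans (Rabs_triang _ _) _; rewrite Rabs_Ropp; lra.
Qed.

Definition elapsed N := \big[Rplus/0]_(i < N) tau i.
Definition occupation m N :=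
  \big[Rplus/0]_(i < N) (if mode i == m then tau i else 0).

Lemma sum_by_mode (c : M -> R) N :
  \big[Rplus/0]_(i < N) (tau i * c (mode i)) =
  \big[Rplus/0]_(m : M) (occupation m N * c m).
Proof.
elim: N => [|N IH].
  by rewrite big_ord0; symmetry; apply: big1 => m _; rewrite /occupation big_ord0; ring.
rewrite big_ord_recr /= IH.
rewrite [RHS](eq_bigr (fun m =>
    occupation m N * c m + (if mode N == m then tau N else 0) * c m)); last first.
  by move=> m _; rewrite /occupation big_ord_recr /=; ring.
rewrite big_split /=; congr (_ + _).
rewrite (bigD1 (mode N)) //= eqxx big1; first ring.
by move=> m /negbTE; rewrite eq_sym => ->; ring.
Qed.

Lemma elapsed_by_mode N : elapsed N = \big[Rplus/0]_(m : M) occupation m N.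
Proof.
rewrite /elapsed (eq_bigr (fun i : 'I_N => tau i * 1)) => [|i _]; last ring.
by rewrite (sum_by_mode (fun _ => 1)); apply: eq_bigr => m _; ring.
Qed.

Lemma occupation_ge0 m N : 0 <= occupation m N.
Proof. by apply: sumR_ge0 => i _; case: (mode i == m); [apply: Rlt_le | lra]. Qed.

Lemma occupation_le_elapsed m N : occupation m N <= elapsed N.
Proof. by apply: sumR_le => i _; case: (mode i == m); [lra | apply: Rlt_le]. Qed.

Lemma elapsed_S N : elapsed N.+1 = elapsed N + tau N.
Proof. by rewrite /elapsed big_ord_recr. Qed.

Lemma elapsed_pos N : 0 < elapsed N.+1.
Proof.
have : 0 <= elapsed N by apply: sumR_ge0 => i _; apply: Rlt_le.
by rewrite elapsed_S; have := tau_pos N; lra.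
Qed.

Lemma elapsed_mono a b : (a <= b)%N -> elapsed a <= elapsed b.
Proof.
move=> /subnK <-; elim: (b - a)%N => [|d IH]; first by rewrite add0n; lra.
by rewrite addSn elapsed_S; have := tau_pos (d + a); lra.
Qed.

Lemma ratio_vanishes phi (g : nat -> R) C : strictly_increasing phi ->
  (forall k, Rabs (g k) <= C) -> Un_cv (fun k => g k / elapsed (phi k).+1) 0.
Proof.
move=> phi_incr g_le eps eps_pos.
have [N0 N0_big] := time_diverges (C / eps); exists N0 => k /leP k_ge.
have T_big : C / eps < elapsed (phi k).+1.
  apply: Rlt_le_trans N0_big (elapsed_mono _).
  exact: leq_trans k_ge (leq_trans (strictly_increasing_ge phi_incr k) (leqnSn _)).
have T_pos := elapsed_pos (phi k).
have C_lt : C < eps * elapsed (phi k).+1.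
  have -> : C = C / eps * eps by field; lra.
  by rewrite (Rmult_comm eps); apply: Rmult_lt_compat_r.
rewrite /R_dist Rminus_0_r /Rdiv Rabs_mult Rabs_inv (Rabs_pos_eq (elapsed _)); last lra.
apply: (Rmult_lt_reg_r (elapsed (phi k).+1)) => //.
by rewrite Rmult_assoc Rinv_l; have := g_le k; lra.
Qed.

Definition frequency k m := occupation m k.+1 / elapsed k.+1.

Lemma frequency_01 k m : 0 <= frequency k m <= 1.
Proof.
have T_pos := elapsed_pos k; have O_ge0 := occupation_ge0 m k.+1.
have O_le := occupation_le_elapsed m k.+1.
rewrite /frequency; split.
  by apply: Rmult_le_pos => //; apply/Rlt_le/Rinv_0_lt_compat.
by apply: (Rmult_le_reg_r (elapsed k.+1)) => //; rewrite /Rdiv Rmult_assoc Rinv_l; lra.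
Qed.

Section Selection.

Variable p : M -> vec n.
Hypothesis p_in : forall m, Rset m (p m).

(* If Rset m contains a rate differing from p m, the scheduler cannot stay
   in mode m for unbounded total time: the environment could then drive the
   state arbitrarily far in that coordinate. *)
Lemma occupation_bounded m x j : Rset m x -> x j <> p m j ->
  exists C, forall N, occupation m N <= C.
Proof.
move=> x_in x_ne; have [D D_bound] := displacement_bounded j.
pose r i := if mode i == m then x else p (mode i).
have r_adm : forall i, Rset (mode i) (r i) by move=> i; rewrite /r; case: eqP => [->|].
have gap_pos : 0 < Rabs (x j - p m j) by apply: Rabs_pos_lt; lra.
exists (2 * D / Rabs (x j - p m j)) => N.
have deviate : \big[Rplus/0]_(i < N) (tau i * r i j) =
    \big[Rplus/0]_(i < N) (tau i * p (mode i) j) + occupation m N * (x j - p m j).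
  rewrite /occupation -sumR_mulr -big_split /=; apply: eq_bigr => i _.
  by rewrite /r; case: eqP => [->|_]; ring.
have := D_bound r r_adm N; have := D_bound (fun i => p (mode i)) (fun i => p_in _) N.
rewrite deviate; set s0 := \big[Rplus/0]_(i < N) _ => s0_le s1_le.
have O_le : Rabs (occupation m N * (x j - p m j)) <= 2 * D.
  have -> : occupation m N * (x j - p m j) =
    (s0 + occupation m N * (x j - p m j)) + - s0 by ring.
  by apply: Rle_trans (Rabs_triang _ _) _; rewrite Rabs_Ropp; lra.
rewrite Rabs_mult (Rabs_pos_eq _ (occupation_ge0 m N)) in O_le.
apply: (Rmult_le_reg_r (Rabs (x j - p m j))) => //.
by rewrite /Rdiv Rmult_assoc Rinv_l; lra.
Qed.

Section LimitFrequencies.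

Variables (phi : nat -> nat) (l : M -> R).
Hypothesis phi_incr : strictly_increasing phi.
Hypothesis frequency_cv : forall m, Un_cv (fun k => frequency (phi k) m) (l m).

Lemma limit_ge0 m : 0 <= l m.
Proof. by apply: (Un_cv_ge0 (frequency_cv m)) => k; case: (frequency_01 (phi k) m). Qed.

Lemma limit_sum1 : \big[Rplus/0]_(m : M) l m = 1.
Proof.
apply: UL_sequence (Un_cv_sum (index_enum M) predT frequency_cv) _.
apply: (Un_cv_ext _ (Un_cv_const 1)) => k /=.
rewrite /frequency /Rdiv sumR_mulr -elapsed_by_mode Rinv_r //.
by have := elapsed_pos (phi k); lra.
Qed.

Lemma limit_singleton m x : Rset m x -> 0 < l m -> x = p m.
Proof.
move=> x_in l_pos; apply: functional_extensionality => j; apply: NNPP => x_ne.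
have [C C_bound] := occupation_bounded x_in x_ne.
suff : l m = 0 by lra.
apply: UL_sequence (frequency_cv m) _; rewrite /frequency.
apply: (ratio_vanishes (C := C) phi_incr) => k.
by rewrite Rabs_pos_eq //; apply: occupation_ge0.
Qed.

Lemma limit_balanced j : \big[Rplus/0]_(m : M) (l m * p m j) = 0.
Proof.
have [D D_bound] := displacement_bounded j.
have cv := Un_cv_sum (index_enum M) predT
  (fun m => CV_mult _ _ _ _ (frequency_cv m) (Un_cv_const (p m j))).
apply: UL_sequence cv _.
apply: (Un_cv_ext (u := fun k => \big[Rplus/0]_(i < (phi k).+1)
    (tau i * p (mode i) j) / elapsed (phi k).+1)).
  move=> k /=; rewrite (sum_by_mode (fun m => p m j)) /Rdiv -sumR_mulr.
  by apply: eq_bigr => m _; rewrite /frequency /Rdiv; ring.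
apply: (ratio_vanishes (C := D) phi_incr) => k.
exact: (D_bound (fun i => p (mode i)) (fun i => p_in _)).
Qed.

End LimitFrequencies.
End Selection.
End StaticSchedule.

Definition support (M : finType) (l : M -> R) : {pred M} :=
  fun m => if Rlt_dec 0 (l m) then true else false.

Lemma supportP (M : finType) (l : M -> R) m : reflect (0 < l m) (m \in support l).
Proof. by rewrite /in_mem /= /support; case: Rlt_dec => H; constructor. Qed.

Lemma weights_support_safe (M : finType) n (l : M -> R) (Rv : M -> vec n) :
  (forall m, 0 <= l m) -> \big[Rplus/0]_(m : M) l m = 1 ->
  (forall j, \big[Rplus/0]_(m : M) (l m * Rv m j) = 0) -> cms_safe (support l) Rv.
Proof.
move=> l_ge0 l_sum1 l_bal.
have restrict (F : M -> R) : (forall m, l m = 0 -> F m = 0) ->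
    \big[Rplus/0]_(m | m \in support l) F m = \big[Rplus/0]_(m : M) F m.
  move=> F0; rewrite big_mkcond; apply: eq_bigr => m _.
  by case: supportP => // /Rnot_lt_le l_le0; rewrite F0 //; have := l_ge0 m; lra.
exists l; split; first by move=> m _; apply: l_ge0.
split; first by rewrite restrict.
by move=> j; rewrite restrict => [|m ->]; [apply: l_bal | ring].
Qed.

Lemma static_winning_safe (M : finType) n (Rset : M -> vec n -> Prop) S x0 :
  is_BMS Rset -> is_polytope S -> has_static_winning Rset S x0 ->
  exists (M' : {pred M}) (Rv : M -> vec n),
    (forall m, m \in M' -> is_singleton (Rset m) (Rv m)) /\ cms_safe M' Rv.
Proof.
move=> BMS S_poly [mode [tau [tau_pos [runs_in_S diverges]]]].
have [p p_in] : exists p : M -> vec n, forall m, Rset m (p m).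
  by apply: choice => m; apply: polytope_nonempty.
have S_bounded := polytope_bounded S_poly.
have [phi [l [phi_incr l_cv]]] :=
  unit_cube_subseq (frequency_01 mode tau_pos).
exists (support l), p; split.
  move=> m /supportP l_pos x; split=> [x_in|->]; last exact: p_in.
  exact: (limit_singleton tau_pos runs_in_S diverges S_bounded p_in phi_incr l_cv x_in).
apply: weights_support_safe.
- exact: (limit_ge0 tau_pos l_cv).
- exact: (limit_sum1 tau_pos l_cv).
- exact: (limit_balanced tau_pos runs_in_S diverges S_bounded p_in phi_incr l_cv).
Qed.

Lemma safe_positive_cycle (M : finType) n (M' : {pred M}) (Rv : M -> vec n) :
  cms_safe M' Rv -> exists (t : M -> R) (a : M) (L : seq M),
    (forall m, m \in a :: L -> m \in M' /\ 0 < t m) /\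
    forall j, \big[Rplus/0]_(m <- a :: L) (t m * Rv m j) = 0.
Proof.
move=> [t [t_ge0 [t_sum1 t_bal]]].
pose L := [seq m <- index_enum M | (m \in M') && (m \in support t)].
have restrict (F : M -> R) : (forall m, m \in M' -> t m = 0 -> F m = 0) ->
    \big[Rplus/0]_(m | m \in M') F m = \big[Rplus/0]_(m <- L) F m.
  move=> F0; rewrite big_filter big_mkcond [RHS]big_mkcond; apply: eq_bigr => m _.
  case M'_m: (m \in M') => //=; case: supportP => // /Rnot_lt_le t_le0.
  by rewrite F0 //; have := t_ge0 m M'_m; lra.
case L_eq: L => [|a L'].
  by move: t_sum1; rewrite restrict // L_eq big_nil; lra.
exists t, a, L'; split.
  by move=> m; rewrite -L_eq mem_filter => /andP [/andP [? /supportP ?] _].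
by move=> j; rewrite -L_eq -restrict => [|m _ ->]; [apply: t_bal | ring].
Qed.

Section CyclicSchedule.

Variables (M : finType) (n : nat) (Rset : M -> vec n -> Prop)
  (S : vec n -> Prop) (x0 : vec n) (Rv : M -> vec n) (t : M -> R)
  (a : M) (L : seq M).

Hypothesis cycle_pos : forall m, m \in a :: L -> 0 < t m.
Hypothesis cycle_singleton : forall m, m \in a :: L -> is_singleton (Rset m) (Rv m).
Hypothesis cycle_balanced : forall j, \big[Rplus/0]_(m <- a :: L) (t m * Rv m j) = 0.
Hypothesis x0_interior : in_interior S x0.

Definition cyclic_mode i := nth a (a :: L) (i %% (size L).+1).

Lemma cyclic_mode_mem i : cyclic_mode i \in a :: L.
Proof. by apply: mem_nth; apply: ltn_pmod. Qed.

Lemma cyclic_mode_periodic i : cyclic_mode ((size L).+1 + i) = cyclic_mode i.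
Proof. by rewrite /cyclic_mode modnDl. Qed.

Lemma sum_one_cycle (g : M -> R) :
  \big[Rplus/0]_(i < (size L).+1) g (cyclic_mode i) = \big[Rplus/0]_(m <- a :: L) g m.
Proof.
rewrite (big_nth a) big_mkord; apply: eq_bigr => i _.
by rewrite /cyclic_mode modn_small.
Qed.

(* With round durations c * t, every complete cycle has zero drift, so after
   N rounds only the N mod k rounds of the current cycle contribute. *)
Lemma cyclic_drift c j N :
  \big[Rplus/0]_(i < N) (c * t (cyclic_mode i) * Rv (cyclic_mode i) j) =
  \big[Rplus/0]_(i < N %% (size L).+1) (c * t (cyclic_mode i) * Rv (cyclic_mode i) j).
Proof.
have := sumR_periodic (f := fun i => c * t (cyclic_mode i) * Rv (cyclic_mode i) j)
  (k := (size L).+1) _ (N %/ (size L).+1) (N %% (size L).+1).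
rewrite -divn_eq => -> => [|i]; last by rewrite cyclic_mode_periodic.
rewrite (sum_one_cycle (fun m => c * t m * Rv m j)).
rewrite (eq_bigr (fun m => t m * Rv m j * c)) => [|m _]; last ring.
by rewrite sumR_mulr cycle_balanced; ring.
Qed.

Definition rate_bound :=
  1 + \big[Rplus/0]_(m <- a :: L) \big[Rplus/0]_(j < n) Rabs (t m * Rv m j).

Lemma rate_bound_spec m j : m \in a :: L -> Rabs (t m * Rv m j) <= rate_bound.
Proof.
move=> m_in; rewrite /rate_bound.
have abs_sum_ge0 m' : 0 <= \big[Rplus/0]_(j < n) Rabs (t m' * Rv m' j).
  by apply: sumR_ge0 => j' _; apply: Rabs_pos.
apply: Rle_trans (_ : _ <= \big[Rplus/0]_(j' < n) Rabs (t m * Rv m j')) _.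
  apply: (@sumR_term_le _ _ (fun j => Rabs (t m * Rv m j)) j) => [j' _|].
    exact: Rabs_pos.
  exact: mem_index_enum.
apply: Rle_trans (_ : _ <= \big[Rplus/0]_(m' <- a :: L)
  \big[Rplus/0]_(j' < n) Rabs (t m' * Rv m' j')) _.
  exact: (sumR_term_le (fun m' _ => abs_sum_ge0 m') m_in).
lra.
Qed.

Lemma rate_bound_ge1 : 1 <= rate_bound.
Proof.
rewrite /rate_bound; have : 0 <= \big[Rplus/0]_(m <- a :: L)
  \big[Rplus/0]_(j < n) Rabs (t m * Rv m j).
  by apply: sumR_ge0 => m _; apply: sumR_ge0 => j _; apply: Rabs_pos.
lra.
Qed.

Lemma cyclic_step_le c i j : 0 <= c ->
  Rabs (c * t (cyclic_mode i) * Rv (cyclic_mode i) j) <= c * rate_bound.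
Proof.
move=> c_ge0; rewrite Rmult_assoc Rabs_mult (Rabs_pos_eq c) //.
by apply: Rmult_le_compat_l => //; apply: rate_bound_spec; apply: cyclic_mode_mem.
Qed.

(* Along the cyclic schedule with durations c * t, the state stays within
   (k + 1) * c * rate_bound of x0 in every coordinate, during every round:
   the current incomplete cycle contributes at most k full steps and the
   current round at most one more. *)
Lemma cyclic_deviation c (r : nat -> vec n) N s j : 0 < c ->
  (forall i, Rset (cyclic_mode i) (r i)) -> 0 <= s <= c * t (cyclic_mode N) ->
  Rabs (vadd (run_state x0 (fun i => c * t (cyclic_mode i)) r N) (vscale s (r N)) j
        - x0 j) <= (INR (size L).+1 + 1) * (c * rate_bound).
Proof.
move=> c_pos r_adm s_range.
have r_eq i : r i = Rv (cyclic_mode i).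
  by apply/(cycle_singleton (cyclic_mode_mem i)).
have cK_ge0 : 0 <= c * rate_bound.
  by apply: Rmult_le_pos; [lra | have := rate_bound_ge1; lra].
rewrite /vadd /vscale run_state_sum.
rewrite (eq_bigr (fun i : 'I_N => c * t (cyclic_mode i) * Rv (cyclic_mode i) j))
  => [|i _]; last by rewrite r_eq.
rewrite cyclic_drift r_eq.
set u := \big[Rplus/0]_(i < N %% (size L).+1) _.
have u_le : Rabs u <= INR (size L).+1 * (c * rate_bound).
  have step_le i := cyclic_step_le i j (Rlt_le _ _ c_pos).
  apply: Rle_trans (sumR_uniform_bound _ step_le) _.
  apply: Rmult_le_compat_r => //.
  by apply/le_INR/leP/ltnW/ltn_pmod.
have last_le : Rabs (s * Rv (cyclic_mode N) j) <= c * rate_bound.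
  have := cyclic_step_le N j (Rlt_le _ _ c_pos).
  rewrite !Rabs_mult (Rabs_pos_eq c) ?(Rabs_pos_eq s); try lra.
  rewrite Rabs_pos_eq; last by apply/Rlt_le/cycle_pos/cyclic_mode_mem.
  by have := Rabs_pos (Rv (cyclic_mode N) j); nra.
have -> : x0 j + u + s * Rv (cyclic_mode N) j - x0 j = u + s * Rv (cyclic_mode N) j.
  by ring.
by apply: Rle_trans (Rabs_triang _ _) _; lra.
Qed.

(* Each complete cycle takes the same positive time c * sum_m t m. *)
Lemma cyclic_time_diverges c : 0 < c -> forall B : R,
  exists N : nat, B < \big[Rplus/0]_(i < N) (c * t (cyclic_mode i)).
Proof.
move=> c_pos B; set P := \big[Rplus/0]_(m <- a :: L) t m.
have P_pos : 0 < P.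
  apply: Rlt_le_trans (cycle_pos (mem_head a L)) _.
  by apply: sumR_term_le (mem_head a L) => m /cycle_pos /Rlt_le.
have [q q_big] := INR_archimed (c * P) B (Rmult_lt_0_compat _ _ c_pos P_pos).
exists (q * (size L).+1)%N; rewrite -[(q * _)%N]addn0.
rewrite (sumR_periodic (f := fun i => c * t (cyclic_mode i)))
  => [|i]; last by rewrite cyclic_mode_periodic.
rewrite big_ord0 (sum_one_cycle (fun m => c * t m)).
rewrite (eq_bigr (fun m => t m * c)) => [|m _]; last ring.
by rewrite sumR_mulr -/P; lra.
Qed.

(* Scaling the durations so that (k + 1) * c * rate_bound is below the
   radius of a ball around x0 inside S yields a static winning strategy. *)
Lemma cyclic_schedule_wins : has_static_winning Rset S x0.
Proof.
have [eps [eps_pos ball]] := x0_interior.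
have K_ge1 := rate_bound_ge1; have k_pos := pos_INR (size L).+1.
pose c := eps / (2 * (INR (size L).+1 + 1) * rate_bound).
have c_pos : 0 < c.
  by apply: Rdiv_lt_0_compat => //; apply: Rmult_lt_0_compat; lra.
have c_small : (INR (size L).+1 + 1) * (c * rate_bound) = eps / 2.
  by rewrite /c; field; lra.
exists cyclic_mode, (fun i => c * t (cyclic_mode i)); split; last split.
- by move=> i; apply: Rmult_lt_0_compat => //; apply/cycle_pos/cyclic_mode_mem.
- move=> r r_adm N s s_range; apply: ball => j.
  by apply: Rle_lt_trans (cyclic_deviation j c_pos r_adm s_range) _; lra.
- exact: cyclic_time_diverges.
Qed.

End CyclicSchedule.

Unset Implicit Arguments.

Theorem proposition4 (M : finType) (n : nat) (Rset : M -> vec n -> Prop)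
  (S : vec n -> Prop) (x0 : vec n)
  (HM : (0 < #|M|)%N) (Hn : (1 <= n)%N)
  (HBMS : is_BMS Rset) (HS : is_polytope S) (Hx0 : in_interior S x0) :
  has_static_winning Rset S x0 <->
  exists (M' : {pred M}) (Rv : M -> vec n),
    (forall m, m \in M' -> is_singleton (Rset m) (Rv m)) /\
    cms_safe M' Rv.
Proof.
split; first exact: static_winning_safe.
move=> [M' [Rv [singleton /safe_positive_cycle [t [a [L [cycle_in balanced]]]]]]].
apply: (cyclic_schedule_wins (Rv := Rv) (t := t) (a := a) (L := L)) => //.
- by move=> m /cycle_in [].
- by move=> m /cycle_in [/singleton].
Qed.
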